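(* Let an FCA with state set $S$, neighborhood $m=l+1+r$, local rule $f$ and boundary type $b\in\{\text{null},\text{periodic}\}$ be given, and let $G$ be its reversibility graph. If $N$ is a negative vertex of $G$ with value $k\ge1$ and some circuit of length $r'$ passes through $N$, then for every integer $x\ge 0$ the FCA is not $(k+xr')$-cell-reversible.
   Context: A one-dimensional finite cellular automaton (FCA) is given by a state set $S=\{0,1,\dots,s-1\}$, integers $l,r\ge 0$ with neighborhood size $m=l+1+r\ge 2$, a local rule $f:S^m\to S$, and a boundary type $b\in\{\text{null},\text{periodic}\}$. For $n\ge 1$ the global map $\tau_n:S^n\to S^n$ sends $(x_0,\dots,x_{n-1})$ to $(y_0,\dots,y_{n-1})$ with $y_i=f(x_{i-l},\dots,x_{i+r})$, where for the null boundary $x_j=0$ whenever $j<0$ or $j>n-1$, and for the periodic boundary indices are taken modulo $n$. The FCA is $n$-cell-reversible if $\tau_n$ is a bijection (equivalently, since $S^n$ is finite, surjective). Reversibility graph (RG). Null boundary: vertices are subsets of $S^{m-1}$; the root is $N_0=\{(a_1,\dots,a_{m-1})\in S^{m-1}: a_1=\dots=a_l=0\}$; the acceptance set is $R=\{(a_1,\dots,a_{m-1})\in S^{m-1}: a_{m-r}=\dots=a_{m-1}=0\}$ (so $R=S^{m-1}$ if $r=0$); for a subset $N$ and $c\in S$, $\delta(N,c)=\{(a_1,\dots,a_{m-1})\in S^{m-1}:\exists a_0\in S,\ (a_0,\dots,a_{m-2})\in N,\ f(a_0,a_1,\dots,a_{m-1})=c\}$. Periodic boundary: vertices are subsets of $S^{m-1}\times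 S^{m-1}$; the root and the acceptance set are $N_0=R=\{(a,a):a\in S^{m-1}\}$; $\delta(N,c)=\{((a_1,\dots,a_{m-1}),(b_1,\dots,b_{m-1})):\exists b_0\in S,\ ((a_1,\dots,a_{m-1}),(b_0,\dots,b_{m-2}))\in N,\ f(b_0,\dots,b_{m-1})=c\}$. In both cases the RG is the directed graph whose vertex set consists of all subsets obtainable from $N_0$ by repeatedly applying $\delta$ (including $N_0$; equal subsets are the same vertex; the empty set may occur), with, for each vertex $N$ and each $c\in S$, an edge labelled $c$ from $N$ to $\delta(N,c)$. The value of a vertex $N$ is the length of a shortest directed path from $N_0$ to $N$. A vertex $N$ is negative if $N\cap R=\emptyset$. A circuit is an elementary directed cycle of the RG (a closed directed path with no repeated vertex other than its start = end; a loop is a circuit of length $1$); its length is its number of edges, and it passes through $N$ if $N$ is one of its vertices. *)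

From mathcomp Require Import all_boot.
Set Implicit Arguments. Unset Strict Implicit. Unset Printing Implicit Defensive.

Inductive boundary := Null | Periodic.

Section FCA.
(* State set S = {0,...,s-1} = 'I_s, with z the state 0;
   neighborhood m = l + 1 + r; local rule f : S^m -> S. *)
Variables (s l r : nat) (z : 'I_s).
Variable f : (l + r).+1.-tuple 'I_s -> 'I_s.

(* Value of cell with (integer) index p - l in configuration x of n cells. *)
Definition cellv (b : boundary) (n : nat) (x : n.-tuple 'I_s) (p : nat) : 'I_s :=
  match b with
  | Null => if (l <= p) && (p < n + l) then nth z x (p - l) else z
  | Periodic => nth z x ((p + n * l - l) %% n)
  end.

(* Global map tau_n : y_i = f(x_{i-l}, ..., x_{i+r}). *)
Definition tau (b : boundary) (n : nat) (x : n.-tuple 'I_s) : n.-tuple 'I_s :=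
  [tuple f [tuple cellv b x (i + t) | t < (l + r).+1] | i < n].

Definition n_cell_reversible (b : boundary) (n : nat) : Prop :=
  bijective (@tau b n).

Definition rgT (b : boundary) : finType :=
  match b with
  | Null => (l + r).-tuple 'I_s
  | Periodic => ((l + r).-tuple 'I_s * (l + r).-tuple 'I_s)%type
  end.

Definition root_null : {set (l + r).-tuple 'I_s} :=
  [set a : (l + r).-tuple 'I_s | [forall i : 'I_(l + r), (i < l) ==> (nth z a i == z)]].
Definition acc_null : {set (l + r).-tuple 'I_s} :=
  [set a : (l + r).-tuple 'I_s | [forall i : 'I_(l + r), (l <= i) ==> (nth z a i == z)]].
Definition delta_null (N : {set (l + r).-tuple 'I_s}) (c : 'I_s)
  : {set (l + r).-tuple 'I_s} :=
  [set a : (l + r).-tuple 'I_s | [exists a0 : 'I_s, [exists q in N,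
      (val q == belast a0 a) && (f (cons_tuple a0 a) == c)]]].

Definition diag_per : {set ((l + r).-tuple 'I_s * (l + r).-tuple 'I_s)} :=
  [set p : (l + r).-tuple 'I_s * (l + r).-tuple 'I_s | p.1 == p.2].
Definition delta_per (N : {set ((l + r).-tuple 'I_s * (l + r).-tuple 'I_s)})
  (c : 'I_s) : {set ((l + r).-tuple 'I_s * (l + r).-tuple 'I_s)} :=
  [set p : (l + r).-tuple 'I_s * (l + r).-tuple 'I_s | [exists b0 : 'I_s, [exists q in N,
      [&& q.1 == p.1, val q.2 == belast b0 p.2 & f (cons_tuple b0 p.2) == c]]]].

Definition rg_root (b : boundary) : {set rgT b} :=
  match b return {set rgT b} with
  | Null => root_null
  | Periodic => diag_per
  end.
Definition rg_acc (b : boundary) : {set rgT b} :=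
  match b return {set rgT b} with
  | Null => acc_null
  | Periodic => diag_per
  end.
Definition rg_delta (b : boundary) : {set rgT b} -> 'I_s -> {set rgT b} :=
  match b return {set rgT b} -> 'I_s -> {set rgT b} with
  | Null => delta_null
  | Periodic => delta_per
  end.

Definition rg_run (b : boundary) (N : {set rgT b}) (w : seq 'I_s) : {set rgT b} :=
  foldl (@rg_delta b) N w.

Definition rg_value (b : boundary) (N : {set rgT b}) (k : nat) : Prop :=
  (exists w : seq 'I_s, size w = k /\ rg_run (rg_root b) w = N) /\
  (forall w : seq 'I_s, rg_run (rg_root b) w = N -> k <= size w).

Definition rg_negative (b : boundary) (N : {set rgT b}) : Prop :=
  N :&: rg_acc b = set0.

Definition circuit_through (b : boundary) (N : {set rgT b}) (len : nat) : Prop :=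
  exists vs : seq {set rgT b},
    [/\ size vs = len, 0 < len, uniq vs, N \in vs &
        forall i, i < len ->
          exists c : 'I_s, rg_delta (nth set0 vs i) c = nth set0 vs (i.+1 %% len)].

End FCA.

From mathcomp Require Import all_boot.
Set Implicit Arguments. Unset Strict Implicit. Unset Printing Implicit Defensive.

(* Were tau_n surjective, the word of length n = k + x r' leading from the root
   to N (a path of length k followed by x turns around the circuit) would be
   tau_n y for some configuration y.  The windows of l + r consecutive cells of
   y, padded according to the boundary, then lie in the successive vertices of
   that path: the first window lies in the root and the last one in the
   acceptance set (it is zero for the null boundary; for the periodic boundary
   the pair (first window, last window) is diagonal).  Hence N meets R. *)

Section Window.
Variables (T : Type) (e : nat -> T).

Definition window n i : n.-tuple T := [tuple e (i + t) | t < n].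

Lemma val_window n i : val (window n i) = map e (iota i n).
Proof. by rewrite /= -[i in iota i]addn0 iotaDl -val_enum_ord -!map_comp. Qed.

Lemma window_cons n i : cons_tuple (e i) (window n i.+1) = window n.+1 i.
Proof.
apply: val_inj; rewrite (val_window n.+1).
exact: (congr1 (cons (e i)) (val_window n i.+1)).
Qed.

Lemma belast_window n i : belast (e i) (window n i.+1) = window n i.
Proof.
rewrite !val_window belast_map; congr (map e _).
by elim: n i => [|n IHn] i //=; rewrite IHn.
Qed.

End Window.

Section Trace.
Variables (s l r : nat) (f : (l + r).+1.-tuple 'I_s -> 'I_s).

Definition rule_at (e : nat -> 'I_s) (i : nat) : 'I_s := f (window e (l + r).+1 i).

Lemma delta_null_window (N : {set (l + r).-tuple 'I_s}) e i :
  window e (l + r) i \in N ->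
  window e (l + r) i.+1 \in delta_null f N (rule_at e i).
Proof.
move=> Ni; rewrite inE; apply/existsP; exists (e i).
apply/existsP; exists (window e _ i).
by rewrite Ni belast_window window_cons !eqxx.
Qed.

Lemma delta_per_window (N : {set (l + r).-tuple 'I_s * (l + r).-tuple 'I_s}) A e i :
  (A, window e (l + r) i) \in N ->
  (A, window e (l + r) i.+1) \in delta_per f N (rule_at e i).
Proof.
move=> Ni; rewrite inE; apply/existsP; exists (e i).
apply/existsP; exists (A, window e _ i).
by rewrite Ni /= belast_window window_cons !eqxx.
Qed.

Lemma rg_run_trace b (v : nat -> rgT s l r b) e :
  (forall (N : {set rgT s l r b}) i,
     v i \in N -> v i.+1 \in rg_delta f N (rule_at e i)) ->
  forall (N : {set rgT s l r b}) m,
    v 0 \in N -> v m \in rg_run f N (mkseq (rule_at e) m).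
Proof.
move=> step N; elim=> [|m IHm] v0N //.
by rewrite mkseqS /rg_run foldl_rcons; apply/step/IHm.
Qed.

Variable z : 'I_s.

Lemma val_tau b n (x : n.-tuple 'I_s) :
  val (tau z f b x) = mkseq (rule_at (cellv l z b x)) n.
Proof. by rewrite /= /mkseq -val_enum_ord -map_comp. Qed.

Lemma cellv_periodicDl n (x : n.-tuple 'I_s) p :
  cellv l z Periodic x (n + p) = cellv l z Periodic x p.
Proof.
case: n x => [|n] x //=; congr (nth z x _).
have l_le : l <= p + n.+1 * l := leq_trans (leq_pmull _ (ltn0Sn n)) (leq_addl _ _).
by rewrite -addnA -addnBA // modnDl.
Qed.

Lemma rg_run_tau_meets_acc b n (x : n.-tuple 'I_s) :
  rg_run f (rg_root l r z b) (tau z f b x) :&: rg_acc l r z b != set0.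
Proof.
rewrite val_tau; set e := cellv l z b x.
case: b @e => e.
- have v0 : window e (l + r) 0 \in root_null l r z.
    rewrite inE; apply/forallP => i; apply/implyP => lt_il.
    by rewrite /window nth_mktuple /e /cellv add0n leqNgt lt_il.
  have vn : window e (l + r) n \in acc_null l r z.
    rewrite inE; apply/forallP => i; apply/implyP => le_li.
    by rewrite /window nth_mktuple /e /cellv ltn_add2l ltnNge le_li andbF.
  apply/set0Pn; exists (window e (l + r) n); rewrite inE vn andbT.
  apply: (@rg_run_trace Null (window e (l + r)) e) => // N.
  exact: delta_null_window.
- set A := window e (l + r) 0.
  have An : window e (l + r) n = A.
    by apply: eq_mktuple => t; rewrite /e cellv_periodicDl.
  have v0 : (A, A) \in diag_per s l r by rewrite inE.
  apply/set0Pn; exists (A, A); rewrite inE v0 andbT -[X in (_, X)]An.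
  apply: (@rg_run_trace Periodic (fun i => (A, window e (l + r) i)) e) => // N.
  exact: delta_per_window.
Qed.

End Trace.

Section ClosedWalks.
Variables (s l r : nat) (f : (l + r).+1.-tuple 'I_s -> 'I_s) (b : boundary).
Implicit Type N : {set rgT s l r b}.

Lemma rg_run_cat N w1 w2 : rg_run f N (w1 ++ w2) = rg_run f (rg_run f N w1) w2.
Proof. exact: foldl_cat. Qed.

Lemma circuit_closed_walk N len :
  circuit_through f N len -> exists u, size u = len /\ rg_run f N u = N.
Proof.
case=> vs [size_vs len_gt0 _ N_vs step].
set j := index N vs.
have walk m : exists u, size u = m /\
    rg_run f (nth set0 vs j) u = nth set0 vs ((j + m) %% len).
  elim: m => [|m [u [size_u run_u]]].
    by exists [::]; rewrite addn0 modn_small // -size_vs index_mem.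
  have [c step_c] := step _ (ltn_pmod (j + m) len_gt0).
  exists (rcons u c); split; first by rewrite size_rcons size_u.
  rewrite /rg_run foldl_rcons -/(rg_run _ _ _) run_u step_c.
  by rewrite -addn1 modnDml addn1 addnS.
have [u [size_u run_u]] := walk len.
by exists u; rewrite modnDr modn_small -?size_vs ?index_mem // nth_index // in run_u.
Qed.

Lemma circuit_closed_walks N len x :
  circuit_through f N len -> exists u, size u = x * len /\ rg_run f N u = N.
Proof.
move=> /circuit_closed_walk [u [size_u run_u]].
elim: x => [|x [v [size_v run_v]]]; first by exists [::].
by exists (u ++ v); rewrite size_cat size_u size_v rg_run_cat run_u run_v.
Qed.

End ClosedWalks.

Theorem theorem2 (s l r : nat) (hs : 0 < s)
  (f : (l + r).+1.-tuple 'I_s -> 'I_s) (b : boundary)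
  (hm : 2 <= l + 1 + r)
  (N : {set rgT s l r b}) (k r' : nat) :
  1 <= k ->
  rg_value (Ordinal hs) f N k ->
  rg_negative (Ordinal hs) N ->
  circuit_through f N r' ->
  forall x : nat, ~ n_cell_reversible (Ordinal hs) f b (k + x * r').
Proof.
move=> _ [[w [size_w run_w]] _] negN circN x [g _ tauK].
have [u [size_u run_u]] := circuit_closed_walks x circN.
have size_wu : size (w ++ u) == k + x * r' by rewrite size_cat size_w size_u.
have := rg_run_tau_meets_acc f (Ordinal hs) b (g (Tuple size_wu)).
by rewrite tauK /= rg_run_cat run_w run_u negN eqxx.
Qed.
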